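(* Let $\Sigma$ be an alphabet with at least two letters, $k\ge1$, and $f\colon(\Sigma^* )^k\to\Sigma^*$ RCP. If there are $u_1,\ldots,u_k\in\Sigma^*$, all different from $\varepsilon$, with $f(u_1,\ldots,u_k)=\varepsilon$, then $f(x_1,\ldots,x_k)=\varepsilon$ for all $x_1,\ldots,x_k\in\Sigma^*$.
   Context: $\Sigma^*$ is the free monoid over $\Sigma$ (finite words, concatenation, empty word $\varepsilon$). A function $f\colon(\Sigma^* )^k\to\Sigma^*$ is RCP if for every monoid morphism $\varphi\colon\Sigma^*\to\Sigma^*$ and all $u_1,\ldots,u_k,v_1,\ldots,v_k$ with $\varphi(u_i)=\varphi(v_i)$ for all $i$, we have $\varphi(f(u_1,\ldots,u_k))=\varphi(f(v_1,\ldots,v_k))$. *)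

From mathcomp Require Import all_boot.
From mathcomp Require Import fintype.
Set Implicit Arguments. Unset Strict Implicit. Unset Printing Implicit Defensive.

Definition monoid_morphism (Sigma : Type) (phi : seq Sigma -> seq Sigma) : Prop :=
  phi [::] = [::] /\ forall u v : seq Sigma, phi (u ++ v) = phi u ++ phi v.

Definition RCP (Sigma : Type) (k : nat) (f : ('I_k -> seq Sigma) -> seq Sigma) : Prop :=
  forall phi : seq Sigma -> seq Sigma, monoid_morphism phi ->
  forall u v : 'I_k -> seq Sigma,
    (forall i, phi (u i) = phi (v i)) -> phi (f u) = phi (f v).

(** Non-erasing morphisms transport the equation [f v = ε] to any [w] with the
    same image.  Mapping every letter to [a] shows that [f v = ε] only depends on
    the lengths of the [v i]; mapping [b] to [a^(K+1)] and every other letter to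
    [a] then lengthens all arguments of a root of [f] by the same [K].  Padding
    an arbitrary [x] with [a]'s up to such lengths and erasing [a] shows that
    [f x] contains no letter other than [a]; by symmetry none other than [b]
    either, so [f x] is empty. *)
From Pilot Require Import Defs.
From mathcomp Require Import all_boot.
Set Implicit Arguments. Unset Strict Implicit. Unset Printing Implicit Defensive.

Lemma subst_morphism (Sigma : Type) (h : Sigma -> seq Sigma) :
  Defs.monoid_morphism (fun s => flatten (map h s)).
Proof. by split=> // u v; rewrite map_cat flatten_cat. Qed.

Lemma filter_morphism (Sigma : Type) (p : pred Sigma) :
  Defs.monoid_morphism (filter p).
Proof. by split=> // u v; rewrite filter_cat. Qed.

Lemma flatten_map_const_nseq (Sigma T : Type) (a : Sigma) (s : seq T) :
  flatten (map (fun=> [:: a]) s) = nseq (size s) a.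
Proof. by elim: s => //= c s ->. Qed.

Section RCPNil.
Variables (Sigma : eqType) (k : nat) (f : ('I_k -> seq Sigma) -> seq Sigma).
Hypothesis f_RCP : RCP f.

Lemma RCP_nil_transfer (phi : seq Sigma -> seq Sigma) (v w : 'I_k -> seq Sigma) :
  Defs.monoid_morphism phi -> (forall s, phi s = [::] -> s = [::]) ->
  (forall i, phi (v i) = phi (w i)) -> f v = [::] -> f w = [::].
Proof.
move=> phi_morph phi_nonerasing phi_vw fv_nil; apply: phi_nonerasing.
by rewrite -(f_RCP phi_morph phi_vw) fv_nil; case: phi_morph.
Qed.

Lemma RCP_nil_size (a : Sigma) (v w : 'I_k -> seq Sigma) :
  (forall i, size (v i) = size (w i)) -> f v = [::] -> f w = [::].
Proof.
move=> size_vw; apply: (RCP_nil_transfer (subst_morphism (fun=> [:: a]))).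
- by case.
- by move=> i; rewrite !flatten_map_const_nseq size_vw.
Qed.

Variables (a b : Sigma) (u : 'I_k -> seq Sigma).
Hypotheses (neq_ab : a != b) (u_neq0 : forall i, u i <> [::]) (fu_nil : f u = [::]).

Lemma RCP_nil_stretch (K : nat) (w : 'I_k -> seq Sigma) :
  (forall i, size (w i) = size (u i) + K) -> f w = [::].
Proof.
move=> size_w.
have size_u_gt0 i : 0 < size (u i) by rewrite lt0n size_eq0; apply/eqP/u_neq0.
pose u' i := rcons (nseq (size (u i)).-1 a) b.
have fu'_nil : f u' = [::].
  by apply: (RCP_nil_size a _ fu_nil) => i; rewrite size_rcons size_nseq prednK.
pose stretch c := if c == b then nseq K.+1 a else [:: a].
have stretch_nseq n : flatten (map stretch (nseq n a)) = nseq n a.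
  by elim: n => //= n ->; rewrite /stretch (negbTE neq_ab).
apply: (RCP_nil_size a (v := fun i => nseq (size (u i) + K) a)).
  by move=> i; rewrite size_w size_nseq.
apply: (RCP_nil_transfer (subst_morphism stretch) _ _ fu'_nil).
- by case=> //= c s; rewrite /stretch; case: (c == b).
- move=> i; rewrite /u' -cats1 map_cat flatten_cat !stretch_nseq /= /stretch eqxx.
  by rewrite cats0 -nseqD -addSnnS prednK.
Qed.

Lemma RCP_nil_all_eq (x : 'I_k -> seq Sigma) : all (pred1 a) (f x).
Proof.
pose K := \max_i size (x i).
pose w i := x i ++ nseq (size (u i) + K - size (x i)) a.
have fw_nil : f w = [::].
  apply: (RCP_nil_stretch (K := K)) => i.
  rewrite size_cat size_nseq subnKC //.
  exact: leq_trans (leq_bigmax i) (leq_addl _ _).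
have erase_nseq n : filter (predC1 a) (nseq n a) = [::].
  by elim: n => //= n ->; rewrite eqxx.
have erase_a : filter (predC1 a) (f x) = [::].
  rewrite -(f_RCP (filter_morphism (predC1 a)) (u := w)) ?fw_nil // => i.
  by rewrite filter_cat erase_nseq cats0.
apply/allP => c c_fx; apply/negPn/negP => c_neq_a.
by have := mem_filter (predC1 a) c (f x); rewrite erase_a /= c_neq_a c_fx.
Qed.

End RCPNil.

Theorem mainTheorem14 (Sigma : finType) (k : nat)
  (f : ('I_k -> seq Sigma) -> seq Sigma) :
  1 < #|Sigma| -> 0 < k -> RCP f ->
  (exists u : 'I_k -> seq Sigma, (forall i, u i <> [::]) /\ f u = [::]) ->
  forall x : 'I_k -> seq Sigma, f x = [::].
Proof.
move=> /card_gt1P [a [b [_ _ neq_ab]]] _ f_RCP [u [u_neq0 fu_nil]] x.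
have := RCP_nil_all_eq f_RCP neq_ab u_neq0 fu_nil x.
have neq_ba : b != a by rewrite eq_sym.
have := RCP_nil_all_eq f_RCP neq_ba u_neq0 fu_nil x.
case: (f x) => //= c s /andP [/eqP -> _] /andP [/eqP eq_ba _].
by rewrite eq_ba eqxx in neq_ab.
Qed.
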